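(* There is no PPL-complete problem under DLOGTIME reductions; that is, there is no problem $\mathcal{P}\in$ PPL such that every problem in PPL is DLOGTIME-reducible to $\mathcal{P}$.
   Context: A random-access Turing machine (RATM) is a multitape Turing machine with a read-only input tape and work tapes, each with an associated binary index tape, and a special random-access state that in one step moves each non-index tape head to the cell addressed by its index tape. For $i\ge1$, $\mathrm{PPL}^i$ is the class of problems solvable by an RATM in time $O(\log^i n)$, where $n$ is the input length, and $\mathrm{PPL}=\bigcup_i \mathrm{PPL}^i$ (problems solvable by an RATM in $O(\mathrm{polylog}(n))$ time). A DLOGTIME reduction from $\mathcal{P}_1$ to $\mathcal{P}_2$ is a function $f$ with $x\in\mathcal{P}_1\iff f(x)\in\mathcal{P}_2$, $|f(x)|$ polynomially bounded in $|x|$, and such that, given $x$ and an index $i$, the $i$-th symbol of $f(x)$ (and the length of $f(x)$) can be computed by an RATM in time $O(\log|x|)$. *)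

From mathcomp Require Import all_boot.
Unset Printing Implicit Defensive.

Definition problem := seq bool -> Prop.

Inductive move := MoveL | MoveS | MoveR.
Definition mv (m : move) (p : nat) : nat :=
  match m with MoveL => p.-1 | MoveS => p | MoveR => p.+1 end.

(* Index tapes are over {0,1,blank} = option bool (None = blank). *)
Fixpoint addr_aux (acc : nat) (s : seq (option bool)) : nat :=
  match s with
  | Some b :: s' => addr_aux (acc.*2 + b) s'
  | _ => acc
  end.
Definition addr (s : seq (option bool)) : nat := addr_aux 0 s.

(* Binary representation of a natural number, most significant bit first
   (0 is represented by the empty string). *)
Fixpoint bin_aux (fuel n : nat) : seq bool :=
  match fuel with
  | 0 => [::]
  | f.+1 => if n == 0 then [::] else rcons (bin_aux f n./2) (odd n)
  end.
Definition bin (n : nat) : seq bool := bin_aux n n.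

(* A random-access Turing machine: a read-only input tape over {0,1} (cells
   beyond the input read as blank = None), k work tapes over a finite alphabet
   G with blank symbol, and an index tape (over {0,1,blank}) attached to the
   input tape and to each work tape.  In a random-access state the machine,
   in one step, moves every non-index head to the cell addressed by its index
   tape and goes to state ra_next q. *)
Record RATM := {
  Q : finType;
  G : finType;
  blank : G;
  ntapes : nat;
  q0 : Q;
  halting : pred Q;
  accepting : pred Q;
  ra : pred Q;
  ra_next : Q -> Q;
  delta : Q -> option bool -> option bool ->
          ntapes.-tuple G -> ntapes.-tuple (option bool) ->
          Q * move                                  (* new state, input head move *)
            * (option bool * move)                  (* input index tape: write, move *)
            * ntapes.-tuple (G * move)              (* work tapes: write, move *)
            * ntapes.-tuple (option bool * move)    (* work index tapes: write, move *)
}.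

Record config (M : RATM) := Config {
  cstate : Q M;
  ipos : nat;
  iidx : seq (option bool);
  iidxpos : nat;
  wtape : 'I_(ntapes M) -> seq (G M);  (* work tapes (blank beyond the end) *)
  wpos : 'I_(ntapes M) -> nat;
  widx : 'I_(ntapes M) -> seq (option bool);
  widxpos : 'I_(ntapes M) -> nat
}.
Arguments Config {M}.
Arguments cstate {M}. Arguments ipos {M}. Arguments iidx {M}. Arguments iidxpos {M}.
Arguments wtape {M}. Arguments wpos {M}. Arguments widx {M}. Arguments widxpos {M}.

Definition read_input (x : seq bool) (p : nat) : option bool :=
  if p < size x then Some (nth false x p) else None.

Definition step (M : RATM) (x : seq bool) (c : config M) : config M :=
  let q := cstate c in
  if halting M q then c
  else if ra M q then
    Config (ra_next M q) (addr (iidx c)) (iidx c) (iidxpos c)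
      (wtape c) (fun j => addr (widx c j)) (widx c) (widxpos c)
  else
    let: (q', im, (iw, iim), wout, wiout) :=
      delta M q (read_input x (ipos c)) (nth None (iidx c) (iidxpos c))
        [tuple nth (blank M) (wtape c j) (wpos c j) | j < ntapes M]
        [tuple nth None (widx c j) (widxpos c j) | j < ntapes M] in
    Config q' (mv im (ipos c))
      (set_nth None (iidx c) (iidxpos c) iw) (mv iim (iidxpos c))
      (fun j => set_nth (blank M) (wtape c j) (wpos c j) (tnth wout j).1)
      (fun j => mv (tnth wout j).2 (wpos c j))
      (fun j => set_nth None (widx c j) (widxpos c j) (tnth wiout j).1)
      (fun j => mv (tnth wiout j).2 (widxpos c j)).

(* Initial configuration; [w] is the initial content of the input index tape
   (empty for ordinary decision; the binary query index for reductions). *)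
Definition init (M : RATM) (w : seq (option bool)) : config M :=
  Config (q0 M) 0 w 0 (fun _ => [::]) (fun _ => 0) (fun _ => [::]) (fun _ => 0).

(* After t steps from the initial configuration on x (with initial input index
   tape w), M has halted, and it accepts iff [ans] holds.  (Halting
   configurations are fixed by [step], so this means "halts within t steps"). *)
Definition halts_with (M : RATM) (x : seq bool) (w : seq (option bool))
    (t : nat) (ans : Prop) : Prop :=
  let c := iter t (step M x) (init M w) in
  halting M (cstate c) /\ (accepting M (cstate c) <-> ans).

(* log n, made positive: floor(log2 n) + 1. *)
Definition logp (n : nat) : nat := (trunc_log 2 n).+1.

Definition PPLi (i : nat) (P : problem) : Prop :=
  exists (M : RATM) (c : nat),
    forall x : seq bool, halts_with M x [::] (c * logp (size x) ^ i) (P x).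

Definition PPL (P : problem) : Prop := exists i, 1 <= i /\ PPLi i P.

(* DLOGTIME reductions: f preserves membership, |f(x)| is polynomially
   bounded, and there are RATMs running in time O(log |x|) which, given x on
   the input tape and an index i <= |f(x)| in binary on the input index tape,
   decide respectively whether "i < |f(x)| and the i-th symbol of f(x) is 1"
   and whether "i < |f(x)|" (the latter determines the length of f(x)). *)
Definition DLOGTIME_reduction (P1 P2 : problem) (f : seq bool -> seq bool) : Prop :=
  (forall x, P1 x <-> P2 (f x)) /\
  (exists c d : nat, forall x, size (f x) <= c * size x ^ d + c) /\
  (exists (Mbit Mlen : RATM) (c : nat), forall x i, i <= size (f x) ->
      halts_with Mbit x (map Some (bin i)) (c * logp (size x))
        (i < size (f x) /\ nth false (f x) i = true) /\
      halts_with Mlen x (map Some (bin i)) (c * logp (size x))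
        (i < size (f x))).

Definition DLOGTIME_reducible (P1 P2 : problem) : Prop :=
  exists f, DLOGTIME_reduction P1 P2 f.

From mathcomp Require Import all_boot.
From mathcomp Require Import zify.

(* Suppose some P in PPL^i were complete. Composing a DLOGTIME reduction f with a
   decider for P yields a procedure that inspects only O(log^(i+1) n) cells of its
   input x: the decider reads O(log^i n) cells of f x, and each of them is computed
   from O(log n) cells of x. The length of f x is handled by taking x of minimal
   image length among the strings of length n: the length machine queried at
   |f x| then certifies |f y| = |f x| for every y of length n that agrees with x
   on the cells it reads.
   On the other hand the tail parity problem, the parity of the (a+2)^(i+2) cells
   ending at cell 2^a, with 2^a the least power of two >= n, is in PPL^(i+2), and
   on strings of length 2^a flipping any one of those cells flips membership.
   For large n the window is longer than the number of inspected cells, so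
   flipping an uninspected cell changes membership in the tail parity problem
   but not membership of the image under f in P. *)

(** * Locality of random-access computations *)

Lemma step_eq (M : RATM) x y (c : config M) :
  read_input x (ipos c) = read_input y (ipos c) -> step M x c = step M y c.
Proof. by move=> xy; rewrite /step xy. Qed.

Definition visited (M : RATM) x w t : seq nat :=
  [seq ipos (iter s (step M x) (init M w)) | s <- iota 0 t].

Lemma size_visited (M : RATM) x w t : size (visited M x w t) = t.
Proof. by rewrite size_map size_iota. Qed.

Lemma iter_step_eq (M : RATM) x y w t :
  {in visited M x w t, read_input x =1 read_input y} ->
  iter t (step M x) (init M w) = iter t (step M y) (init M w).
Proof.
elim: t => [|t IH] //=; rewrite /visited -addn1 iotaD map_cat => xy.
rewrite -IH => [|p vp]; last by apply: xy; rewrite mem_cat vp.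
by apply: step_eq; apply: xy; rewrite mem_cat /= mem_seq1 eqxx orbT.
Qed.

Lemma halts_with_visited {M : RATM} {x y w t} {A B : Prop} :
  {in visited M x w t, read_input x =1 read_input y} ->
  halts_with M x w t A -> halts_with M y w t B -> (A <-> B).
Proof. by rewrite /halts_with => /iter_step_eq-> [_ ?] [_ ?]; tauto. Qed.

Lemma iter_step_halted (M : RATM) x c n :
  halting M (cstate c) -> iter n (step M x) c = c.
Proof. by move=> hc; elim: n => //= n ->; rewrite /step hc. Qed.

Definition flip (x : seq bool) j := set_nth false x j (~~ nth false x j).

Lemma size_flip x j : j < size x -> size (flip x j) = size x.
Proof. by move=> jx; rewrite size_set_nth; apply/maxn_idPr. Qed.

Lemma read_input_flip x j p : j < size x ->
  read_input (flip x j) p = if p == j then Some (~~ nth false x j) else read_input x p.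
Proof.
move=> jx; rewrite /read_input size_flip // nth_set_nth /=.
by case: eqP => [->|]; rewrite ?jx.
Qed.

Definition answers_bits (Mbit Mlen : RATM) (t : nat) (x fx : seq bool) : Prop :=
  forall i, i <= size fx ->
    halts_with Mbit x (map Some (bin i)) t (i < size fx /\ nth false fx i = true) /\
    halts_with Mlen x (map Some (bin i)) t (i < size fx).

Definition queried_cells (M0 Mbit Mlen : RATM) (T t : nat) (x fx : seq bool) : seq nat :=
  visited Mlen x (map Some (bin (size fx))) t ++
  flatten [seq visited Mbit x (map Some (bin p)) t | p <- visited M0 fx [::] T].

Lemma size_queried_cells M0 Mbit Mlen T t x fx :
  size (queried_cells M0 Mbit Mlen T t x fx) = t + T * t.
Proof.
rewrite size_cat size_visited -[in T * t](size_visited M0 fx [::] T); congr (_ + _).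
by elim: (visited _ _ _ _) => //= p s IH; rewrite size_cat IH size_visited mulSn.
Qed.

Section ReductionLocality.
Context {Mbit Mlen : RATM} {t : nat} {x y fx fy : seq bool}.
Hypotheses (bits_x : answers_bits Mbit Mlen t x fx) (bits_y : answers_bits Mbit Mlen t y fy).

Lemma answers_bits_size : size fx <= size fy ->
  {in visited Mlen x (map Some (bin (size fx))) t, read_input x =1 read_input y} ->
  size fy = size fx.
Proof.
move=> le agree; have [_ len_x] := bits_x _ (leqnn _); have [_ len_y] := bits_y _ le.
have [_ yx] := halts_with_visited agree len_x len_y.
by apply/eqP; rewrite eqn_leq le andbT leqNgt; apply/negP => /yx; rewrite ltnn.
Qed.

Lemma answers_bits_nth p : size fx = size fy -> p < size fx ->
  {in visited Mbit x (map Some (bin p)) t, read_input x =1 read_input y} ->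
  nth false fx p = nth false fy p.
Proof.
move=> eq_size px agree; have [bit_x _] := bits_x _ (ltnW px).
have py : p < size fy by rewrite -eq_size.
have [bit_y _] := bits_y _ (ltnW py).
have [xy yx] := halts_with_visited agree bit_x bit_y.
by apply/idP/idP => v; [case: (xy (conj px v)) | case: (yx (conj py v))].
Qed.

Context {P : problem} {M0 : RATM} {T : nat -> nat}.
Hypothesis decide : forall z, halts_with M0 z [::] (T (size z)) (P z).

Lemma queried_cells_determine : size fx <= size fy ->
  {in queried_cells M0 Mbit Mlen (T (size fx)) t x fx, read_input x =1 read_input y} ->
  P fx <-> P fy.
Proof.
move=> le agree.
have eq_size : size fy = size fx.
  by apply: answers_bits_size le _ => p vp; apply: agree; rewrite mem_cat vp.
have := decide fy; rewrite eq_size; apply: halts_with_visited (decide fx) => p vp.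
rewrite /read_input eq_size; case: ltnP => // px; congr Some.
apply: (answers_bits_nth _ (esym eq_size) px) => q vq; apply: agree.
by rewrite mem_cat; apply/orP; right; apply/flatten_mapP; exists p.
Qed.

End ReductionLocality.

Lemma exists_notin_window (B : seq nat) lo :
  exists2 j, lo <= j < lo + (size B).+1 & j \notin B.
Proof.
have : ~~ all (mem B) (iota lo (size B).+1).
  apply/negP => /allP/(uniq_leq_size (iota_uniq _ _)).
  by rewrite size_iota ltnn.
by case/allPn => j; rewrite mem_iota; exists j.
Qed.

Lemma exp_dominates_poly C d : exists u, C < u /\ C * u ^ d < 2 ^ u.
Proof.
set w := (C * d.+1 ^ d).+1.
exists (d.+1 * w); split.
  apply: leq_trans (leq_pmull _ _); last by [].
  by rewrite ltnS leq_pmulr // expn_gt0.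
rewrite expnMn (mulnC d.+1) expnM.
apply: leq_trans (_ : w ^ d.+1 < (2 ^ w) ^ d.+1); last by rewrite ltn_exp2r // ltn_expl.
by rewrite ltnS expnS mulnA leq_mul2r leqnSn orbT.
Qed.

Lemma polylog_window C i :
  exists b, (C * b.+1 ^ i.+1).+1 < 2 ^ b /\ (C * b.+1 ^ i.+1).+1 < b.+2 ^ i.+2.
Proof.
have [[|b] [Cb bexp]] := exp_dominates_poly (2 * C + 2) i.+1; first by [].
exists b; have : 0 < b.+1 ^ i.+1 by rewrite expn_gt0.
rewrite [2 ^ _]expnS in bexp; move: bexp.
set P := b.+1 ^ i.+1 => bexp P_gt0; split; first by lia.
apply: leq_ltn_trans (_ : b.+1 ^ i.+2 < _); last by rewrite ltn_exp2r.
rewrite expnS -/P; apply: leq_trans (_ : C.+1 * P <= _); first by lia.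
by rewrite leq_mul2r; apply/orP; right; lia.
Qed.

Lemma logp_exp2 b : logp (2 ^ b) = b.+1.
Proof. by rewrite /logp trunc_expnK. Qed.

Lemma logp_leq n k : 0 < k -> n < 2 ^ k -> logp n <= k.
Proof.
move=> k_gt0 nk; have [->|n_gt0] := posnP n; first by rewrite /logp trunc_log0.
by rewrite -(ltn_exp2l _ _ (isT : 1 < 2)); apply: leq_ltn_trans nk; apply: trunc_logP.
Qed.

Lemma logp_poly_exp2 cf d b L :
  L <= cf * (2 ^ b) ^ d + cf -> logp L <= (d + cf.+1) * b.+1.
Proof.
move=> L_le; apply: leq_trans (_ : logp L <= b * d + cf.+1) _; last by nia.
apply: logp_leq; first by rewrite addnS.
apply: leq_ltn_trans L_le _.
have : cf < 2 ^ cf by apply: ltn_expl.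
have : 0 < 2 ^ (b * d) by rewrite expn_gt0.
rewrite -expnM expnD expnS; set X := 2 ^ (b * d); set Y := 2 ^ cf; nia.
Qed.

Lemma up_log_leq_logp n : up_log 2 n <= logp n.
Proof. by apply: up_log_min => //; apply/ltnW/trunc_log_ltn. Qed.

Lemma exp2_lt_up_log n k : k < up_log 2 n -> 2 ^ k < n.
Proof.
move=> lt; rewrite ltnNge; apply: contraTN lt => /(up_log_min (isT : 1 < 2)).
by rewrite -leqNgt.
Qed.

Lemma queried_cells_bound c c0 A i u L : 0 < u -> logp L <= A * u ->
  c * u + c0 * logp L ^ i * (c * u) <= c * (c0 * A ^ i + 1) * u ^ i.+1.
Proof.
move=> u_gt0 L_le.
have pow_le : logp L ^ i <= A ^ i * u ^ i.
  by rewrite -expnMn; case: i => [|i]; rewrite ?expn0 ?leq_exp2r.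
have U_gt0 : 0 < u ^ i by rewrite expn_gt0 u_gt0.
have factor_le : 1 + c0 * logp L ^ i <= (c0 * A ^ i + 1) * u ^ i.
  by move: pow_le U_gt0; set l := logp L ^ i; set U := u ^ i; set Ai := A ^ i; nia.
apply: leq_trans (_ : c * u * (1 + c0 * logp L ^ i) <= _); first by lia.
by rewrite expnS mulnACA leq_mul2l factor_le orbT.
Qed.

Lemma exists_min_image_size (f : seq bool -> seq bool) n :
  exists2 x, size x = n & forall y, size y = n -> size (f x) <= size (f y).
Proof.
have [t _ t_min] :=
  @arg_minnP _ (nseq_tuple n false) predT (fun t : n.-tuple bool => size (f t)) isT.
exists (val t) => [|y /eqP yn]; first exact: size_tuple.
exact: (t_min (Tuple yn)).
Qed.

(** * Tail parity and reflected counters *)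

Definition parity_below x (top s : nat) : bool :=
  \big[addb/false]_(k < s) odflt false (read_input x (top - k)).

Lemma parity_below_S x top s :
  parity_below x top s.+1 = parity_below x top s (+) odflt false (read_input x (top - s)).
Proof. by rewrite /parity_below big_ord_recr. Qed.

(* [0 < j] is needed: for [k > top] the truncated [top - k] revisits cell 0. *)
Lemma parity_below_flip x top s j : 0 < j < size x -> j <= top -> top - j < s ->
  parity_below (flip x j) top s = ~~ parity_below x top s.
Proof.
move=> /andP[j_gt0 jx] jtop js; pose k0 := Ordinal js.
rewrite /parity_below (bigD1 k0) // [in RHS](bigD1 k0) //= subKn //.
rewrite read_input_flip // eqxx {2}/read_input jx addNb; congr (~~ addb _ _).
apply: eq_bigr => k kk0; rewrite read_input_flip //; case: eqP => // kj.
by move: kk0; rewrite -val_eqE /=; lia.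
Qed.

Fixpoint numeral (w : nat) (l : seq nat) : nat :=
  if l is e :: l' then e + w * numeral w l' else 0.

Fixpoint digits_dec (W : nat) (l : seq nat) : seq nat :=
  if l is e :: l' then if e == 0 then W :: digits_dec W l' else e.-1 :: l' else [::].

Lemma size_digits_dec W l : size (digits_dec W l) = size l.
Proof. by elim: l => //= e l IH; case: ifP => //= _; rewrite IH. Qed.

Lemma nth_digits_dec W l i : i < size l ->
  nth 0 (digits_dec W l) i =
    if i < find (fun e => e != 0) l then W
    else if i == find (fun e => e != 0) l then (nth 0 l i).-1 else nth 0 l i.
Proof.
elim: l i => [|e l IH] [|i] //= il; case: eqP => //= _.
exact: IH.
Qed.

Lemma numeral_eq0 W l : (numeral W.+1 l == 0) = ~~ has (fun e => e != 0) l.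
Proof. by elim: l => //= e l IH; rewrite negb_or -IH negbK addn_eq0 muln_eq0. Qed.

Lemma numeral_digits_dec W l : has (fun e => e != 0) l ->
  numeral W.+1 (digits_dec W l) = (numeral W.+1 l).-1.
Proof.
elim: l => //= e l IH /orP[e_neq0|l_neq0]; first by rewrite (negbTE e_neq0) /=; lia.
case: eqP => [-> /=|e_neq0 /=]; last by lia.
have : 0 < numeral W.+1 l by rewrite lt0n numeral_eq0 negbK.
by rewrite IH //; set n := numeral W.+1 l; nia.
Qed.

Lemma numeral_nseq W k : numeral W.+1 (nseq k W) = W.+1 ^ k - 1.
Proof.
elim: k => //= k ->; rewrite expnS.
have : 0 < W.+1 ^ k by rewrite expn_gt0.
set P := W.+1 ^ k; nia.
Qed.

Definition bin_pow2 (a : nat) : seq (option bool) := Some true :: nseq a (Some false).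

Lemma addr_bin_pow2 a : addr (bin_pow2 a) = 2 ^ a.
Proof.
suff aux n : addr_aux n (nseq a (Some false)) = n * 2 ^ a by rewrite /addr /= aux mul1n.
elim: a n => [|a IH] n /=; first by rewrite muln1.
by rewrite IH addn0 -muln2 expnS mulnA.
Qed.

Lemma nth_bin_pow2 a p :
  nth None (bin_pow2 a) p = if p == 0 then Some true else if p <= a then Some false else None.
Proof. by case: p => [|p] //=; rewrite nth_nseq. Qed.

Lemma set_nth_bin_pow2 a : set_nth None (bin_pow2 a) a.+1 (Some false) = bin_pow2 a.+1.
Proof.
by rewrite /bin_pow2 /=; congr cons; elim: a => //= a ->.
Qed.

(** * A random-access machine for the tail parity *)

Section ParityMachine.
Variable K : nat.

(* In the doubling phase (states [inl _]) every index tape holds the binary word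
   of 2^a and the input head reads cell 2^a; while that cell is nonblank, the
   words are extended to that of 2^(a+1) and the jump state moves the head
   there. In the counting phase (states [inr (done, parity, dirs)]) the input
   head walks left from cell 2^a while the K work index tapes keep the word of 2^a, whose cell 0 is its only [Some true]
   and whose cell a+1 is blank, so that the index-tape head positions in
   [0, a+1] serve as the digits of a reflected base-(a+2) counter, head j
   sweeping right iff [dirs j]. Each step moves the first head that has not
   reached the end of its sweep and reverses the sweeps of all earlier heads, so
   the counter passes through (a+2)^K positions in as many steps. *)
Definition pm_state : finType := ('I_3 + bool * bool * {ffun 'I_K -> bool})%type.
Definition st_start : 'I_3 := Ordinal (isT : 0 < 3).
Definition st_jump : 'I_3 := Ordinal (isT : 1 < 3).
Definition st_probe : 'I_3 := Ordinal (isT : 2 < 3).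

Definition pm_halting (q : pm_state) : bool := if q is inr (done, _, _) then done else false.
Definition pm_accepting (q : pm_state) : bool := if q is inr (_, par, _) then par else false.

Definition digit_done (dirs : {ffun 'I_K -> bool}) (cells : K.-tuple (option bool)) j :=
  tnth cells j == if dirs j then None else Some true.

Definition active_digit dirs cells : nat :=
  find (fun j => ~~ digit_done dirs cells j) (enum 'I_K).

Definition turn_digits (js : nat) (dirs : {ffun 'I_K -> bool}) : {ffun 'I_K -> bool} :=
  [ffun j : 'I_K => if j < js then ~~ dirs j else dirs j].

Definition digit_move (js : nat) (dirs : {ffun 'I_K -> bool}) (j : 'I_K) : move :=
  if j == js :> nat then (if dirs j then MoveR else MoveL) else MoveS.

Definition pm_delta (q : pm_state) (r ir : option bool) (_ : K.-tuple unit)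
    (cells : K.-tuple (option bool)) :=
  let keep := [tuple (tt, MoveS) | _ < K] in
  match q with
  | inl o =>
    if o == st_start then
      (inl st_jump, MoveS, (Some true, MoveR), keep, [tuple (Some true, MoveR) | _ < K])
    else if r is Some _ then
      (inl st_jump, MoveS, (Some false, MoveR), keep, [tuple (Some false, MoveR) | _ < K])
    else
      (inr (false, false, [ffun _ => false]), MoveS, (ir, MoveS), keep,
       [tuple (tnth cells j, MoveS) | j < K])
  | inr (_, par, dirs) =>
    let js := active_digit dirs cells in
    (inr (js == K, par (+) odflt false r, turn_digits js dirs), MoveL, (ir, MoveS), keep,
     [tuple (tnth cells j, digit_move js dirs j) | j < K])
  end.

Definition parity_machine : RATM :=
  @Build_RATM pm_state unit tt K (inl st_start) pm_halting pm_accepting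
    (fun q => q == inl st_jump) (fun _ => inl st_probe) pm_delta.

Local Notation PM := parity_machine.

Definition probing a (c : config PM) : Prop :=
  [/\ cstate c = inl st_probe, ipos c = 2 ^ a, iidx c = bin_pow2 a, iidxpos c = a.+1
    & forall j, widx c j = bin_pow2 a /\ widxpos c j = a.+1].

Lemma probing_start x : probing 0 (iter 2 (step PM x) (init PM [::])).
Proof. by split=> // j; rewrite /= !tnth_mktuple. Qed.

Lemma probing_step {x a c} :
  probing a c -> 2 ^ a < size x -> probing a.+1 (iter 2 (step PM x) c).
Proof.
case=> q_c ipos_c iidx_c iidxpos_c widx_c ax.
rewrite /= {2}/step q_c /= ipos_c /read_input ax /step /= iidx_c iidxpos_c.
rewrite set_nth_bin_pow2 addr_bin_pow2; split=> // j; rewrite /= !tnth_mktuple /=.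
by have [-> ->] := widx_c j; rewrite set_nth_bin_pow2.
Qed.

Lemma probing_reach {x a} : (forall a', a' < a -> 2 ^ a' < size x) ->
  probing a (iter (2 * a + 2) (step PM x) (init PM [::])).
Proof.
elim: a => [|a IH] below_x; first exact: probing_start.
have -> : 2 * a.+1 + 2 = 2 + (2 * a + 2) by lia.
rewrite iterD.
apply: probing_step (below_x a (ltnSn a)).
by apply: IH => a' a'a; apply: below_x; lia.
Qed.

Definition gap a (dirs : {ffun 'I_K -> bool}) (pos : 'I_K -> nat) (j : 'I_K) : nat :=
  if dirs j then a.+1 - pos j else pos j.

Definition gaps a dirs pos : seq nat := [seq gap a dirs pos j | j <- enum 'I_K].

Lemma nth_gaps a dirs pos (j : 'I_K) : nth 0 (gaps a dirs pos) j = gap a dirs pos j.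
Proof. by rewrite (nth_map j) ?size_enum_ord // nth_ord_enum. Qed.

Lemma eq_gaps a dirs (pos pos' : 'I_K -> nat) :
  pos =1 pos' -> gaps a dirs pos = gaps a dirs pos'.
Proof. by move=> eq_pos; apply: eq_map => j; rewrite /gap eq_pos. Qed.

Definition counting x a s (c : config PM) : Prop := exists dirs,
  [/\ cstate c = inr (false, parity_below x (2 ^ a) s, dirs), ipos c = 2 ^ a - s,
      forall j, nth None (widx c j) =1 nth None (bin_pow2 a),
      forall j, widxpos c j <= a.+1
    & numeral a.+2 (gaps a dirs (widxpos c)) = a.+2 ^ K - 1 - s].

Lemma counting_start {x a c} :
  probing a c -> size x <= 2 ^ a -> counting x a 0 (step PM x c).
Proof.
case=> q_c ipos_c _ _ widx_c xa.
rewrite /step q_c /= ipos_c /read_input ltnNge xa /=.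
exists [ffun _ => false]; split=> [|||j|]; rewrite ?subn0 //=.
- by rewrite /parity_below big_ord0.
- move=> j p; rewrite !tnth_mktuple nth_set_nth /=; have [-> ->] := widx_c j.
  by case: eqP => // ->; rewrite nth_bin_pow2 ltnn.
- by rewrite tnth_mktuple; have [_ ->] := widx_c j.
set l := gaps _ _ _; have /all_pred1P -> : all (pred1 a.+1) l.
  apply/allP => _ /mapP[j _ ->]; rewrite /gap ffunE tnth_mktuple /=.
  by have [_ ->] := widx_c j.
by rewrite size_map size_enum_ord numeral_nseq.
Qed.

Lemma digit_done_gap {a dirs} {w : 'I_K -> seq (option bool)} {pos : 'I_K -> nat} {j} :
  nth None (w j) =1 nth None (bin_pow2 a) -> pos j <= a.+1 ->
  digit_done dirs [tuple nth None (w k) (pos k) | k < K] j = (gap a dirs pos j == 0).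
Proof.
rewrite /digit_done /gap tnth_mktuple => -> pj; rewrite nth_bin_pow2.
case: (dirs j); case: (pos j) pj => [|p] pj //=.
  by rewrite subSS subn_eq0; case: leqP.
by case: ltnP.
Qed.

Lemma active_digit_gaps {a dirs} {w : 'I_K -> seq (option bool)} {pos : 'I_K -> nat} :
  (forall j, nth None (w j) =1 nth None (bin_pow2 a)) -> (forall j, pos j <= a.+1) ->
  active_digit dirs [tuple nth None (w k) (pos k) | k < K] =
    find (fun e => e != 0) (gaps a dirs pos).
Proof.
move=> wj pj; rewrite /active_digit /gaps [in RHS]find_map; apply: eq_find => j.
by rewrite /preim /= (digit_done_gap (wj j) (pj j)).
Qed.

Lemma gap_turn {a dirs} {pos : 'I_K -> nat} js {j : 'I_K} : pos j <= a.+1 ->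
  (j < js -> gap a dirs pos j = 0) -> (j == js :> nat -> gap a dirs pos j != 0) ->
  gap a (turn_digits js dirs) (fun k => mv (digit_move js dirs k) (pos k)) j =
    (if j < js then a.+1 else if j == js :> nat then (gap a dirs pos j).-1
     else gap a dirs pos j)
  /\ mv (digit_move js dirs j) (pos j) <= a.+1.
Proof.
rewrite /gap /turn_digits /digit_move ffunE.
case: ltngtP => /= _ pj before at_js; case: (dirs j) before at_js => /= before at_js;
  by try have := before isT; try have := at_js isT; lia.
Qed.

Lemma gaps_turn {a dirs} {pos : 'I_K -> nat} :
  let l := gaps a dirs pos in let js := find (fun e => e != 0) l in
  (forall j, pos j <= a.+1) -> has (fun e => e != 0) l ->
  gaps a (turn_digits js dirs) (fun k => mv (digit_move js dirs k) (pos k)) =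
    digits_dec a.+1 l
  /\ forall j, mv (digit_move js dirs j) (pos j) <= a.+1.
Proof.
move=> l js pj nz.
have before_js (j : 'I_K) : j < js -> gap a dirs pos j = 0.
  by move=> /(before_find 0); rewrite nth_gaps; case: eqP.
have at_js (j : 'I_K) : j == js :> nat -> gap a dirs pos j != 0.
  by move/eqP=> eq; rewrite -nth_gaps eq; apply: (nth_find 0 nz).
have turn j := gap_turn js (pj j) (before_js j) (at_js j).
split=> [|j]; last by case: (turn j).
apply: (@eq_from_nth _ 0) => [|i]; first by rewrite size_digits_dec !size_map.
rewrite size_map size_enum_ord => iK; pose j := Ordinal iK.
rewrite -[i]/(val j) nth_gaps nth_digits_dec ?size_map -?enumT ?size_enum_ord //.
by rewrite nth_gaps; case: (turn j).
Qed.

Lemma counting_next {x a s c} : counting x a s c -> s < a.+2 ^ K ->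
  exists dirs, cstate (step PM x c) =
      inr (s == a.+2 ^ K - 1, parity_below x (2 ^ a) s.+1, dirs)
    /\ (s < a.+2 ^ K - 1 -> counting x a s.+1 (step PM x c)).
Proof.
case=> dirs [q_c ipos_c widx_c pos_le val_c] s_lt.
set l := gaps a dirs (widxpos c); set js := find (fun e => e != 0) l.
have nz : has (fun e => e != 0) l = (s < a.+2 ^ K - 1).
  by rewrite -[LHS]negbK -(numeral_eq0 a.+1) val_c subn_eq0 -ltnNge.
have last_step : (js == K) = (s == a.+2 ^ K - 1).
  have size_l : size l = K by rewrite size_map size_enum_ord.
  rewrite -{1}size_l eqn_leq find_size /= leqNgt -has_find nz.
  by apply/idP/idP; lia.
rewrite /step q_c /= (active_digit_gaps widx_c pos_le) -/l -/js last_step ipos_c.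
exists (turn_digits js dirs); split; first by rewrite parity_below_S.
move=> s_lt'; have [gaps_js pos_js] := gaps_turn pos_le (etrans nz s_lt').
exists (turn_digits js dirs); split=> /=.
- by rewrite (ltn_eqF s_lt') parity_below_S.
- by rewrite subnS.
- move=> j p; rewrite !tnth_mktuple nth_set_nth /=.
  by case: eqP => [->|_]; rewrite widx_c.
- by move=> j; rewrite tnth_mktuple; apply: pos_js.
rewrite (@eq_gaps _ _ _ (fun j => mv (digit_move js dirs j) (widxpos c j))) => [|j].
  by rewrite gaps_js numeral_digits_dec ?nz // val_c; lia.
by rewrite tnth_mktuple.
Qed.

Lemma counting_reach {x a s c} :
  counting x a 0 c -> s < a.+2 ^ K -> counting x a s (iter s (step PM x) c).
Proof.
move=> start; elim: s => [|s IH] s_lt //=.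
by have [_ [_ next]] := counting_next (IH (ltnW s_lt)) (ltnW s_lt); apply: next; lia.
Qed.

Lemma parity_machine_halts x (a := up_log 2 (size x)) : exists dirs,
  cstate (iter (2 * a + 3 + a.+2 ^ K) (step PM x) (init PM [::])) =
    inr (true, parity_below x (2 ^ a) (a.+2 ^ K), dirs).
Proof.
have probe := probing_reach (@exp2_lt_up_log (size x)).
have start := counting_start probe (up_logP _ (isT : 1 < 2)).
have pow_gt0 : 0 < a.+2 ^ K by rewrite expn_gt0.
have max_lt : a.+2 ^ K - 1 < a.+2 ^ K by lia.
have -> : 2 * a + 3 + a.+2 ^ K = 1 + (a.+2 ^ K - 1 + (1 + (2 * a + 2))) by lia.
rewrite iterD (iterD (a.+2 ^ K - 1)) (iterD 1).
have [dirs [-> _]] := counting_next (counting_reach start max_lt) max_lt.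
by exists dirs; rewrite eqxx subn1 prednK.
Qed.

End ParityMachine.

Lemma parity_machine_time {K a l} :
  0 < K -> 0 < l -> a <= l -> 2 * a + 3 + a.+2 ^ K <= (6 + 3 ^ K) * l ^ K.
Proof.
move=> K_gt0 l_gt0 al.
have pow_le : a.+2 ^ K <= 3 ^ K * l ^ K by rewrite -expnMn leq_exp2r //; lia.
have l_le : l <= l ^ K by rewrite -{1}(expn1 l) leq_pexp2l.
by move: pow_le l_le; set L := l ^ K; set T := 3 ^ K; nia.
Qed.

Definition tail_parity K : problem := fun x =>
  let a := up_log 2 (size x) in parity_below x (2 ^ a) (a.+2 ^ K).

Lemma tail_parity_PPL K : 0 < K -> PPLi K (tail_parity K).
Proof.
move=> K_gt0; exists (parity_machine K), (6 + 3 ^ K) => x.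
have [dirs run] := parity_machine_halts K x.
have time := parity_machine_time K_gt0 (isT : 0 < logp (size x)) (up_log_leq_logp (size x)).
by rewrite /halts_with -(subnK time) iterD iter_step_halted run.
Qed.

Definition tail_sensitive (P : problem) (K : nat) := forall b x j,
  size x = 2 ^ b -> 0 < j < 2 ^ b -> 2 ^ b - j < b.+2 ^ K -> (P (flip x j) <-> ~ P x).

Lemma tail_parity_sensitive K : tail_sensitive (tail_parity K) K.
Proof.
move=> b x j xb /andP[j_gt0 jb] jwin.
rewrite /tail_parity size_flip ?xb ?up_expnK //.
rewrite parity_below_flip ?xb ?j_gt0 //; last exact: ltnW.
by case: parity_below; split.
Qed.

Lemma no_reduction_to_PPLi {P P' : problem} {i : nat} :
  PPLi i P -> tail_sensitive P' i.+2 -> ~ DLOGTIME_reducible P' P.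
Proof.
move=> [M0 [c0 decide]] sens [f [red [[cf [d size_f]] [Mbit [Mlen [c bits]]]]]].
set C := c * (c0 * (d + cf.+1) ^ i + 1).
have [b [win_lt_exp win_lt_poly]] := polylog_window C i.
have [x size_x x_min] := exists_min_image_size f (2 ^ b).
have bits_b z : size z = 2 ^ b -> answers_bits Mbit Mlen (c * b.+1) z (f z).
  by move=> zb; rewrite -logp_exp2 -zb; apply: bits.
set B := queried_cells M0 Mbit Mlen (c0 * logp (size (f x)) ^ i) (c * b.+1) x (f x).
have B_small : size B <= C * b.+1 ^ i.+1.
  rewrite size_queried_cells; apply: queried_cells_bound => //.
  by apply: logp_poly_exp2; rewrite -size_x; apply: size_f.
have [j /andP[j_lo j_hi] jB] := exists_notin_window B (2 ^ b - (size B).+1).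
have j_x : 0 < j < size x by rewrite size_x; lia.
have size_y : size (flip x j) = 2 ^ b by rewrite size_flip -?size_x //; case/andP: j_x.
have agree : {in B, read_input x =1 read_input (flip x j)}.
  move=> p pB; rewrite read_input_flip; last by case/andP: j_x.
  by case: eqP => // pj; move: jB; rewrite -pj pB.
have P_fxy : P (f x) <-> P (f (flip x j)).
  apply: (queried_cells_determine (T := fun n => c0 * logp n ^ i)
           (bits_b x size_x) (bits_b _ size_y)).
  - exact: decide.
  - exact: x_min.
  - exact: agree.
have P'_xy : P' (flip x j) <-> ~ P' x.
  by apply: (sens b) => //; [rewrite -size_x | lia].
by have := red x; have := red (flip x j); tauto.
Qed.

Theorem mainTheorem11 :
  ~ (exists P : problem, PPL P /\ forall P' : problem, PPL P' -> DLOGTIME_reducible P' P).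
Proof.
case=> P [[i [_ P_PPLi]] complete].
apply: (no_reduction_to_PPLi P_PPLi (tail_parity_sensitive i.+2)).
by apply: complete; exists i.+2; split; last exact: tail_parity_PPL.
Qed.
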